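(* Let $\Gamma$ be a propositional theory and $Q$ a set of atoms such that every positive occurrence in $\Gamma$ of an atom from $Q$ is in the scope of negation. For each $q\in Q$ let $Def(q)$ be a formula such that every negative occurrence in $Def(q)$ of an atom from $Q$ is in the scope of negation. Then $\Gamma\cup\{Def(q)\to q:q\in Q\}$ and $\Gamma\cup\{Def(q)\leftrightarrow q:q\in Q\}$ have the same stable models.
   Context: Formulas are built from atoms and $\bot$ using $\wedge,\vee,\to$; $\top$, $\neg F$ and $F\leftrightarrow G$ abbreviate $\bot\to\bot$, $F\to\bot$ and $(F\to G)\wedge(G\to F)$. Reduct: $\bot^X=\bot$; $a^X=a$ if $a\in X$, else $\bot$; $(F\otimes G)^X=F^X\otimes G^X$ if $X\models F\otimes G$, else $\bot$; $\Gamma^X=\{F^X:F\in\Gamma\}$. $X$ is a stable model of $\Gamma$ if $X\models\Gamma^X$ and no proper subset of $X$ satisfies $\Gamma^X$. An occurrence of an atom in a formula (with abbreviations expanded) is positive if it is in the antecedent of an even number of implications and negative if odd. An occurrence is in the scope of negation if it occurs inside a subformula of the form $\neg F$, i.e. $F\to\bot$. *)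

(* Propositional formulas over an arbitrary type of atoms A;
   interpretations are (possibly infinite) sets of atoms X : A -> bool;
   theories are (possibly infinite) sets of formulas. *)
From Stdlib Require Import Bool.

Set Implicit Arguments.

Inductive formula (A : Type) : Type :=
| FBot : formula A
| FAtom : A -> formula A
| FAnd : formula A -> formula A -> formula A
| FOr : formula A -> formula A -> formula A
| FImp : formula A -> formula A -> formula A.

Arguments FBot {A}.

Definition theory (A : Type) := formula A -> Prop.

Definition FNeg {A} (F : formula A) : formula A := FImp F FBot.
Definition FIff {A} (F G : formula A) : formula A := FAnd (FImp F G) (FImp G F).

Fixpoint sat {A} (X : A -> bool) (F : formula A) : bool :=
  match F with
  | FBot => false
  | FAtom a => X a
  | FAnd F G => sat X F && sat X G
  | FOr F G => sat X F || sat X G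
  | FImp F G => implb (sat X F) (sat X G)
  end.

Definition sat_th {A} (X : A -> bool) (T : theory A) : Prop :=
  forall F, T F -> sat X F = true.

Fixpoint reduct {A} (X : A -> bool) (F : formula A) : formula A :=
  match F with
  | FBot => FBot
  | FAtom a => if X a then FAtom a else FBot
  | FAnd F G => if sat X (FAnd F G) then FAnd (reduct X F) (reduct X G) else FBot
  | FOr F G => if sat X (FOr F G) then FOr (reduct X F) (reduct X G) else FBot
  | FImp F G => if sat X (FImp F G) then FImp (reduct X F) (reduct X G) else FBot
  end.

Definition reduct_th {A} (X : A -> bool) (T : theory A) : theory A :=
  fun F => exists G, T G /\ F = reduct X G.

Definition proper_subset {A} (Y X : A -> bool) : Prop :=
  (forall a, Y a = true -> X a = true) /\ (exists a, X a = true /\ Y a = false).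

Definition stable_model {A} (T : theory A) (X : A -> bool) : Prop :=
  sat_th X (reduct_th X T) /\
  forall Y, proper_subset Y X -> ~ sat_th Y (reduct_th X T).

(* occ_ok Q p F : every occurrence in F of an atom from Q whose polarity is
   p (true = positive: in the antecedent of an even number of implications,
   counted relative to F) is in the scope of negation, i.e. inside a
   subformula of the form G -> FBot. *)
Fixpoint occ_ok {A} (Q : A -> Prop) (p : bool) (F : formula A) : Prop :=
  match F with
  | FBot => True
  | FAtom a => if p then ~ Q a else True
  | FAnd F G => occ_ok Q p F /\ occ_ok Q p G
  | FOr F G => occ_ok Q p F /\ occ_ok Q p G
  | FImp F G =>
      match G with
      | FBot => True
      | _ => occ_ok Q (negb p) F /\ occ_ok Q p G
      end
  end.

Definition pos_in_scope_of_neg {A} (Q : A -> Prop) (F : formula A) : Prop := occ_ok Q true F.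
Definition neg_in_scope_of_neg {A} (Q : A -> Prop) (F : formula A) : Prop := occ_ok Q false F.

Definition add_rules {A} (G : theory A) (Q : A -> Prop) (Def : A -> formula A) : theory A :=
  fun F => G F \/ exists q, Q q /\ F = FImp (Def q) (FAtom q).

Definition add_defs {A} (G : theory A) (Q : A -> Prop) (Def : A -> formula A) : theory A :=
  fun F => G F \/ exists q, Q q /\ F = FIff (Def q) (FAtom q).

From Pilot Require Import Defs.
From Stdlib Require Import Bool Classical ClassicalEpsilon.

(* The engine is a polarity-restricted monotonicity of the
   reduct (reduct_polar_mono): if the Q-atoms of polarity p occur in F only
   under negation, Y |= F^X survives changing Y on Q-atoms only, downwards
   for positive p and upwards for negative p; a negated subformula has a
   reduct whose value does not depend on Y at all.  Then:
   - rules -> definitions: a stable model X of the rules satisfies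
     q -> Def(q) for q in Q, else X \ {q} would satisfy the reduct; and the
     reduct of a definition entails that of its rule, so minimality carries over.
   - definitions -> rules: a proper subset Y of X satisfying the reduct of the
     rules yields the greatest "supported" set below Y (equal to Y off Q, each
     of its Q-atoms justified by the reduct of its definition), which satisfies
     the reduct of the definitions and contradicts minimality of X. *)

Definition holds (P : Prop) : bool :=
  if excluded_middle_informative P then true else false.

Lemma holds_true (P : Prop) : P -> holds P = true.
Proof. unfold holds; destruct (excluded_middle_informative P); tauto. Qed.

Lemma holds_false (P : Prop) : ~ P -> holds P = false.
Proof. unfold holds; destruct (excluded_middle_informative P); tauto. Qed.

Lemma holds_spec {P : Prop} : holds P = true -> P.
Proof. unfold holds; destruct (excluded_middle_informative P); easy. Qed.

Section Interpretations.
Context {A : Type}.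

Definition subset (Y Z : A -> bool) : Prop := forall a, Y a = true -> Z a = true.
Definition agree_off (Q : A -> Prop) (Y Z : A -> bool) : Prop :=
  forall a, ~ Q a -> Y a = Z a.
Definition le_on (Q : A -> Prop) (Y Z : A -> bool) : Prop :=
  forall a, Q a -> Y a = true -> Z a = true.

Lemma subset_le_on {Q : A -> Prop} {Y Z : A -> bool} : subset Y Z -> le_on Q Y Z.
Proof. intros H a _; apply H. Qed.

Definition remove (X : A -> bool) (q : A) : A -> bool :=
  fun a => X a && negb (holds (a = q)).

Lemma remove_subset (X : A -> bool) (q : A) : subset (remove X q) X.
Proof. intros a H; apply andb_true_iff in H; tauto. Qed.

Lemma remove_self (X : A -> bool) (q : A) : remove X q q = false.
Proof. unfold remove; rewrite holds_true by reflexivity; apply andb_false_r. Qed.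

Lemma remove_other (X : A -> bool) (q a : A) : a <> q -> remove X q a = X a.
Proof. intro H; unfold remove; rewrite holds_false by exact H; apply andb_true_r. Qed.

Definition insert (Z : A -> bool) (q : A) : A -> bool :=
  fun a => Z a || holds (a = q).

Lemma insert_self (Z : A -> bool) (q : A) : insert Z q q = true.
Proof. unfold insert; rewrite holds_true by reflexivity; apply orb_true_r. Qed.

Lemma insert_other (Z : A -> bool) (q a : A) : a <> q -> insert Z q a = Z a.
Proof. intro H; unfold insert; rewrite holds_false by exact H; apply orb_false_r. Qed.

Lemma insert_cases {Z : A -> bool} {q a : A} :
  insert Z q a = true -> Z a = true \/ a = q.
Proof. intro H; apply orb_true_iff in H as [H | H]; [left; exact H | right; exact (holds_spec H)]. Qed.

Lemma off_Q_neq {Q : A -> Prop} {q a : A} : Q q -> ~ Q a -> a <> q.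
Proof. intros Hq Ha ->; contradiction. Qed.

(* Y minus all Q-atoms: the least supported set below Y. *)
Definition restrict_off (Q : A -> Prop) (Y : A -> bool) : A -> bool :=
  fun a => Y a && negb (holds (Q a)).

Lemma restrict_off_subset (Q : A -> Prop) (Y : A -> bool) : subset (restrict_off Q Y) Y.
Proof. intros a H; apply andb_true_iff in H; tauto. Qed.

Lemma restrict_off_agree (Q : A -> Prop) (Y : A -> bool) : agree_off Q (restrict_off Q Y) Y.
Proof. intros a Ha; unfold restrict_off; rewrite holds_false by exact Ha; apply andb_true_r. Qed.

Lemma restrict_off_Q (Q : A -> Prop) (Y : A -> bool) (q : A) :
  Q q -> restrict_off Q Y q = false.
Proof. intro Hq; unfold restrict_off; rewrite holds_true by exact Hq; apply andb_false_r. Qed.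

End Interpretations.

Section Reduct.
Context {A : Type}.

Lemma reduct_sound {X Y : A -> bool} {F : formula A} :
  sat Y (reduct X F) = true -> sat X F = true.
Proof.
  destruct F as [| a | F1 F2 | F1 F2 | F1 F2]; simpl.
  - discriminate.
  - destruct (X a); simpl; auto.
  - destruct (sat X F1 && sat X F2); simpl; auto.
  - destruct (sat X F1 || sat X F2); simpl; auto.
  - destruct (implb (sat X F1) (sat X F2)); simpl; auto.
Qed.

Lemma reduct_self (X : A -> bool) (F : formula A) : sat X (reduct X F) = sat X F.
Proof.
  induction F as [| a | F1 IH1 F2 IH2 | F1 IH1 F2 IH2 | F1 IH1 F2 IH2]; simpl.
  - reflexivity.
  - destruct (X a) eqn:E; simpl; auto.
  - destruct (sat X F1 && sat X F2) eqn:E; simpl; rewrite ?IH1, ?IH2; auto.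
  - destruct (sat X F1 || sat X F2) eqn:E; simpl; rewrite ?IH1, ?IH2; auto.
  - destruct (implb (sat X F1) (sat X F2)) eqn:E; simpl; rewrite ?IH1, ?IH2; auto.
Qed.

Lemma reduct_atom (X Y : A -> bool) (a : A) : sat Y (reduct X (FAtom a)) = X a && Y a.
Proof. simpl; destruct (X a); reflexivity. Qed.

Lemma reduct_neg (X Y : A -> bool) (F : formula A) :
  sat Y (reduct X (FImp F FBot)) = negb (sat X F).
Proof.
  simpl; destruct (sat X F) eqn:E; simpl; [reflexivity |].
  destruct (sat Y (reduct X F)) eqn:E2; [| reflexivity].
  apply reduct_sound in E2; congruence.
Qed.

Lemma reduct_and_elim {X Y : A -> bool} {F G : formula A} :
  sat Y (reduct X (FAnd F G)) = true ->
  sat Y (reduct X F) = true /\ sat Y (reduct X G) = true.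
Proof.
  simpl; destruct (sat X F && sat X G); simpl; [apply andb_true_iff | discriminate].
Qed.

Lemma reduct_imp_mp {X Y : A -> bool} {F G : formula A} :
  sat Y (reduct X (FImp F G)) = true -> sat Y (reduct X F) = true ->
  sat Y (reduct X G) = true.
Proof.
  simpl; destruct (implb (sat X F) (sat X G)); simpl; [| discriminate].
  intros H HF; rewrite HF in H; exact H.
Qed.

Lemma reduct_imp_vacuous {X Y : A -> bool} {F G : formula A} :
  sat X F = false -> sat Y (reduct X (FImp F G)) = true.
Proof.
  intro HF; simpl; rewrite HF; simpl.
  destruct (sat Y (reduct X F)) eqn:E; [| reflexivity].
  apply reduct_sound in E; congruence.
Qed.

Lemma reduct_imp_intro {X Y : A -> bool} {F G : formula A} :
  sat Y (reduct X G) = true -> sat Y (reduct X (FImp F G)) = true.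
Proof.
  intro H; pose proof (reduct_sound H) as HXG; simpl.
  rewrite HXG, implb_true_r; simpl; rewrite H; apply implb_true_r.
Qed.

Lemma reduct_iff_intro {X Y : A -> bool} {F G : formula A} :
  sat X (FIff F G) = true -> sat Y (reduct X F) = sat Y (reduct X G) ->
  sat Y (reduct X (FIff F G)) = true.
Proof.
  unfold FIff; intros HX HE; simpl in HX |- *; rewrite HX; simpl.
  apply andb_true_iff in HX as [H1 H2]; rewrite H1, H2; simpl.
  rewrite HE; destruct (sat Y (reduct X G)); reflexivity.
Qed.

Lemma sat_th_reduct (X Y : A -> bool) (T : theory A) :
  sat_th Y (reduct_th X T) <-> forall G, T G -> sat Y (reduct X G) = true.
Proof.
  unfold sat_th, reduct_th; split.
  - intros H G HG; apply H; eauto.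
  - intros H F [G [HG ->]]; auto.
Qed.

Lemma sat_th_reduct_self (X : A -> bool) (T : theory A) :
  sat_th X (reduct_th X T) <-> sat_th X T.
Proof.
  rewrite sat_th_reduct; unfold sat_th; split; intros H G HG;
    [rewrite <- reduct_self | rewrite reduct_self]; auto.
Qed.

Lemma stable_model_sat {T : theory A} {X : A -> bool} :
  stable_model T X -> sat_th X T.
Proof. intros [H _]; apply sat_th_reduct_self, H. Qed.

End Reduct.

Section Polarity.
Context {A : Type} {Q : A -> Prop}.

Lemma reduct_polar_mono (X : A -> bool) (F : formula A) :
  forall (p : bool) (Y Y' : A -> bool), occ_ok Q p F -> agree_off Q Y Y' ->
  (if p then le_on Q Y' Y else le_on Q Y Y') ->
  sat Y (reduct X F) = true -> sat Y' (reduct X F) = true.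
Proof.
  induction F as [| a | F1 IH1 F2 IH2 | F1 IH1 F2 IH2 | F1 IH1 F2 IH2];
    intros p Y Y' Hocc Hoff Hon; simpl in Hocc.
  - simpl; auto.
  - rewrite !reduct_atom; intro H; apply andb_true_iff in H as [HXa HYa].
    rewrite HXa; simpl; destruct (classic (Q a)) as [Hq | Hq].
    + destruct p; [contradiction | exact (Hon a Hq HYa)].
    + rewrite <- (Hoff a Hq); exact HYa.
  - destruct Hocc as [H1 H2]; simpl.
    destruct (sat X F1 && sat X F2); simpl; [| auto].
    rewrite !andb_true_iff; intros [? ?]; split; [eapply IH1 | eapply IH2]; eauto.
  - destruct Hocc as [H1 H2]; simpl.
    destruct (sat X F1 || sat X F2); simpl; [| auto].
    rewrite !orb_true_iff; intros [? | ?]; [left; eapply IH1 | right; eapply IH2]; eauto.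
  - assert (HF2 : F2 = FBot \/ (occ_ok Q (negb p) F1 /\ occ_ok Q p F2))
      by (destruct F2; simpl in Hocc; auto).
    destruct HF2 as [-> | [H1 H2]]; [rewrite !reduct_neg; auto |].
    simpl; destruct (implb (sat X F1) (sat X F2)); simpl; [| auto].
    destruct (sat Y' (reduct X F1)) eqn:E1; simpl; [intro H | auto].
    (* the antecedent has the opposite polarity: transport it backwards *)
    assert (HY1 : sat Y (reduct X F1) = true).
    { apply (IH1 (negb p) Y' Y); auto.
      - intros a Ha; symmetry; auto.
      - destruct p; exact Hon. }
    rewrite HY1 in H; simpl in H; eapply IH2; eauto.
Qed.

Lemma reduct_antitone (X Y Y' : A -> bool) (F : formula A) :
  pos_in_scope_of_neg Q F -> agree_off Q Y Y' -> le_on Q Y' Y ->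
  sat Y (reduct X F) = true -> sat Y' (reduct X F) = true.
Proof. intros; eapply (reduct_polar_mono X F true); eauto. Qed.

Lemma reduct_monotone (X Y Y' : A -> bool) (F : formula A) :
  neg_in_scope_of_neg Q F -> agree_off Q Y Y' -> le_on Q Y Y' ->
  sat Y (reduct X F) = true -> sat Y' (reduct X F) = true.
Proof. intros; eapply (reduct_polar_mono X F false); eauto. Qed.

End Polarity.

Section Proposition9.
Context {A : Type} {Gamma : theory A} {Q : A -> Prop} {Def : A -> formula A}.
Hypothesis hGamma : forall F, Gamma F -> pos_in_scope_of_neg Q F.
Hypothesis hDef : forall q, Q q -> neg_in_scope_of_neg Q (Def q).

Local Notation Rules := (add_rules Gamma Q Def).
Local Notation Defs := (add_defs Gamma Q Def).

Lemma rule_mem {q : A} : Q q -> Rules (FImp (Def q) (FAtom q)).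
Proof. intro Hq; right; exists q; auto. Qed.

Lemma def_mem {q : A} : Q q -> Defs (FIff (Def q) (FAtom q)).
Proof. intro Hq; right; exists q; auto. Qed.

Lemma rule_holds {X : A -> bool} {q : A} :
  sat_th X Rules -> Q q -> sat X (Def q) = true -> X q = true.
Proof.
  intros H Hq HD; pose proof (H _ (rule_mem Hq)) as Hr; simpl in Hr.
  rewrite HD in Hr; exact Hr.
Qed.

Lemma sat_defs_rules (X : A -> bool) : sat_th X Defs -> sat_th X Rules.
Proof.
  intros H G [HG | [q [Hq ->]]]; [apply H; left; exact HG |].
  pose proof (H _ (def_mem Hq)) as Hd; simpl in Hd |- *.
  apply andb_true_iff in Hd; tauto.
Qed.

Lemma defs_reduct_rules_reduct (X Y : A -> bool) :
  sat_th Y (reduct_th X Defs) -> sat_th Y (reduct_th X Rules).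
Proof.
  rewrite !sat_th_reduct; intros H G [HG | [q [Hq ->]]]; [apply H; left; exact HG |].
  exact (proj1 (reduct_and_elim (H _ (def_mem Hq)))).
Qed.

(* In a stable model of the rules every true Q-atom has its definition true:
   otherwise dropping q would still satisfy the reduct. *)
Lemma stable_rules_supported {X : A -> bool} {q : A} :
  stable_model Rules X -> Q q -> X q = true -> sat X (Def q) = true.
Proof.
  intros HS Hq Xq; destruct (sat X (Def q)) eqn:ED; [reflexivity | exfalso].
  destruct HS as [Hsat Hmin]; rewrite sat_th_reduct in Hsat.
  apply (Hmin (remove X q)).
  - split; [apply remove_subset | exists q; split; [exact Xq | apply remove_self]].
  - apply sat_th_reduct; intros G [HG | [q' [Hq' ->]]].
    + apply (reduct_antitone X X (remove X q) G (hGamma G HG)).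
      * intros a Ha; symmetry; apply remove_other, (off_Q_neq Hq Ha).
      * apply subset_le_on, remove_subset.
      * apply Hsat; left; exact HG.
    + destruct (sat X (Def q')) eqn:ED'; [| apply reduct_imp_vacuous; exact ED'].
      assert (Hneq : q' <> q) by (intros ->; congruence).
      assert (Xq' : X q' = true).
      { apply (rule_holds (q := q')); auto.
        apply sat_th_reduct_self, sat_th_reduct, Hsat. }
      apply reduct_imp_intro; rewrite reduct_atom, remove_other, Xq' by exact Hneq.
      reflexivity.
Qed.

Lemma stable_rules_sat_defs (X : A -> bool) : stable_model Rules X -> sat_th X Defs.
Proof.
  intros HS; pose proof (stable_model_sat HS) as HR.
  intros G [HG | [q [Hq ->]]]; [apply HR; left; exact HG |]; simpl.
  destruct (X q) eqn:Xq.
  - rewrite (stable_rules_supported HS Hq Xq); reflexivity.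
  - destruct (sat X (Def q)) eqn:E; [| reflexivity].
    rewrite (rule_holds HR Hq E) in Xq; discriminate.
Qed.

Section GreatestSupported.
Variables X Y : A -> bool.

Definition supported (Z : A -> bool) : Prop :=
  subset Z Y /\ agree_off Q Z Y /\
  forall q, Q q -> Z q = true -> sat Z (reduct X (Def q)) = true.

Definition greatest_supported : A -> bool :=
  fun a => holds (exists Z, supported Z /\ Z a = true).

Local Notation GS := greatest_supported.

Lemma supported_le (Z : A -> bool) : supported Z -> subset Z GS.
Proof. intros HZ a Za; apply holds_true; eauto. Qed.

Lemma gs_subset : subset GS Y.
Proof. intros a H; destruct (holds_spec H) as [Z [[HZY _] HZa]]; auto. Qed.

Lemma gs_agree : agree_off Q GS Y.
Proof.
  intros a Ha; destruct (Y a) eqn:Ya.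
  - apply (supported_le (restrict_off Q Y)).
    + split; [apply restrict_off_subset | split; [apply restrict_off_agree |]].
      intros q Hq; rewrite restrict_off_Q by exact Hq; discriminate.
    + rewrite restrict_off_agree by exact Ha; exact Ya.
  - destruct (GS a) eqn:E; [| reflexivity].
    apply gs_subset in E; congruence.
Qed.

Lemma gs_supported : supported GS.
Proof.
  split; [apply gs_subset | split; [apply gs_agree |]].
  intros q Hq Hgq; destruct (holds_spec Hgq) as [Z [HZ HZq]].
  pose proof HZ as [_ [HZoff HZdef]].
  apply (reduct_monotone X Z GS (Def q) (hDef q Hq)).
  - intros a Ha; rewrite HZoff, gs_agree; auto.
  - apply subset_le_on, supported_le, HZ.
  - auto.
Qed.

(* A Q-atom of Y whose definition holds in the reduct on GS belongs to GS,
   because GS u {q} is again supported. *)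
Lemma gs_closed (q : A) :
  Q q -> Y q = true -> sat GS (reduct X (Def q)) = true -> GS q = true.
Proof.
  intros Hq Yq HD.
  assert (Hoff : agree_off Q GS (insert GS q)).
  { intros a Ha; symmetry; apply insert_other, (off_Q_neq Hq Ha). }
  apply (supported_le (insert GS q)); [| apply insert_self].
  split; [| split].
  - intros a Ha; destruct (insert_cases Ha) as [H | ->]; [apply gs_subset, H | exact Yq].
  - intros a Ha; rewrite <- Hoff, gs_agree; auto.
  - intros q' Hq' Hins.
    apply (reduct_monotone X GS (insert GS q) (Def q') (hDef q' Hq') Hoff).
    + intros a _ Ha; unfold insert; rewrite Ha; reflexivity.
    + destruct (insert_cases Hins) as [H | ->]; [| exact HD].
      exact (proj2 (proj2 gs_supported) q' Hq' H).
Qed.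

Lemma gs_fixpoint (q : A) :
  sat_th Y (reduct_th X Rules) -> Q q -> sat GS (reduct X (Def q)) = GS q.
Proof.
  intros HY Hq; destruct (GS q) eqn:Gq.
  - exact (proj2 (proj2 gs_supported) q Hq Gq).
  - destruct (sat GS (reduct X (Def q))) eqn:E; [| reflexivity].
    rewrite <- Gq; symmetry; apply gs_closed; auto.
    assert (HYD : sat Y (reduct X (Def q)) = true)
      by exact (reduct_monotone X GS Y (Def q) (hDef q Hq) gs_agree
                  (subset_le_on gs_subset) E).
    pose proof (reduct_imp_mp (proj1 (sat_th_reduct _ _ _) HY _ (rule_mem Hq)) HYD)
      as HYq.
    rewrite reduct_atom in HYq; apply andb_true_iff in HYq; tauto.
Qed.

End GreatestSupported.

(* Minimality of a stable model of the definitions also holds for the rules: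
   a counter-model Y for the rules yields the counter-model GS for the
   definitions. *)
Lemma stable_defs_minimal (X : A -> bool) :
  stable_model Defs X ->
  forall Y, proper_subset Y X -> ~ sat_th Y (reduct_th X Rules).
Proof.
  intros [Hsat Hmin] Y [HYX [a0 [Xa0 Ya0]]] HY.
  set (Z := greatest_supported X Y).
  apply (Hmin Z); [split |].
  - intros a Ha; apply HYX, (gs_subset X Y), Ha.
  - exists a0; split; [exact Xa0 |].
    destruct (Z a0) eqn:E; [| reflexivity].
    apply (gs_subset X Y) in E; congruence.
  - apply sat_th_reduct; intros G [HG | [q [Hq ->]]].
    + apply (reduct_antitone X Y Z G (hGamma G HG)).
      * intros a Ha; symmetry; apply gs_agree, Ha.
      * apply subset_le_on, gs_subset.
      * apply (proj1 (sat_th_reduct _ _ _) HY); left; exact HG.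
    + apply reduct_iff_intro.
      * rewrite <- reduct_self; apply (proj1 (sat_th_reduct _ _ _) Hsat), def_mem, Hq.
      * rewrite reduct_atom; unfold Z; rewrite (gs_fixpoint X Y q HY Hq); fold Z.
        destruct (Z q) eqn:E; [| rewrite andb_false_r; reflexivity].
        rewrite (HYX q (gs_subset X Y q E)); reflexivity.
Qed.

End Proposition9.

Theorem proposition9 (A : Type) (Gamma : theory A) (Q : A -> Prop)
  (Def : A -> formula A)
  (hGamma : forall F, Gamma F -> pos_in_scope_of_neg Q F)
  (hDef : forall q, Q q -> neg_in_scope_of_neg Q (Def q)) :
  forall X : A -> bool,
    stable_model (add_rules Gamma Q Def) X <-> stable_model (add_defs Gamma Q Def) X.
Proof.
  intro X; split; intro HS.
  - split.
    + apply sat_th_reduct_self, (stable_rules_sat_defs hGamma), HS.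
    + intros Y HYX HY; apply (proj2 HS Y HYX), defs_reduct_rules_reduct, HY.
  - split.
    + apply sat_th_reduct_self, sat_defs_rules, stable_model_sat, HS.
    + apply (stable_defs_minimal hGamma hDef), HS.
Qed.
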